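(* Let $c_1,c_2>0$ be constants. For positive integers $n,m$, consider the distribution $\mu$ on $\Sigma^{[n]\times[m]}$ obtained by choosing a function $\ell\colon[m]\to[n]$ uniformly at random and setting $x_{i,j}=(0,\bot,\bot,\bot)$ if $i=\ell(j)$ and $x_{i,j}=(1,\bot,\bot,\bot)$ otherwise. Let $\mathcal A$ be a randomized decision tree (a probability distribution over deterministic decision trees querying cells of $[n]\times[m]$) such that for every deterministic tree in its support and every input $x$ in the support of $\mu$, the tree terminates on $x$ only after it has either found at least $c_1 m$ cells with value $0$ or queried at least $c_2 nm$ cells. Then the maximum over $x$ in the support of $\mu$ of the expected number of queries made by $\mathcal A$ on $x$ is $\Omega(nm)$, where the constant in $\Omega$ depends only on $c_1,c_2$.
   Context: $\Sigma$ is an alphabet whose symbols are quadruples $(\text{value},\text{pointer},\text{pointer},\text{pointer})$ with value in $\{0,1\}$ and pointers in a set containing the null pointer $\bot$; a cell has value $0$ if the first component of its symbol is $0$. A query asks for the symbol $x_c$ of one cell $c$. *)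

From HB Require Import structures.
From mathcomp Require Import all_boot all_order all_algebra.
From mathcomp Require Import reals.
Set Implicit Arguments. Unset Strict Implicit. Unset Printing Implicit Defensive.
Import Order.TTheory GRing.Theory Num.Theory.
Local Open Scope ring_scope.

(* Alphabet Sigma: quadruples (value, pointer, pointer, pointer).
   value : bool, with [false] standing for 0 and [true] for 1.
   Pointers range over [option Pt]; the null pointer ⊥ is [None]. *)
Definition Sym (Pt : Type) : Type :=
  (bool * option Pt * option Pt * option Pt)%type.

Definition sym_value (Pt : Type) (s : Sym Pt) : bool := s.1.1.1.

Definition cell (n m : nat) : Type := ('I_n * 'I_m)%type.

Inductive dtree (C S : Type) : Type :=
| Leaf : bool -> dtree C S
| Node : C -> (S -> dtree C S) -> dtree C S.

Fixpoint trace (C S : Type) (t : dtree C S) (x : C -> S) : seq C :=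
  match t with
  | Leaf _ => [::]
  | Node c k => c :: trace (k (x c)) x
  end.

Definition nqueries (C S : Type) (t : dtree C S) (x : C -> S) : nat :=
  size (trace t x).

Definition ndistinct (C : eqType) (S : Type) (t : dtree C S) (x : C -> S) : nat :=
  size (undup (trace t x)).

Definition nzeros_found (C : eqType) (Pt : Type) (t : dtree C (Sym Pt))
    (x : C -> Sym Pt) : nat :=
  count (fun c => ~~ sym_value (x c)) (undup (trace t x)).

Definition input_of (n m : nat) (Pt : Type) (l : 'I_m -> 'I_n) :
    cell n m -> Sym Pt :=
  fun c => (c.1 != l c.2, None, None, None).

Definition in_supp_mu (n m : nat) (Pt : Type) (x : cell n m -> Sym Pt) : Prop :=
  exists l : 'I_m -> 'I_n, x = input_of Pt l.

(* A randomized decision tree with finite support: k trees T i with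
   probabilities w i (nonnegative, summing to 1). *)
Definition is_distribution (R : realType) (k : nat) (w : 'I_k -> R) : Prop :=
  (forall i, 0 <= w i) /\ \sum_(i < k) w i = 1.

Definition expected_queries (R : realType) (C S : Type) (k : nat)
    (w : 'I_k -> R) (T : 'I_k -> dtree C S) (x : C -> S) : R :=
  \sum_(i < k) w i * (nqueries (T i) x)%:R.

From HB Require Import structures.
From mathcomp Require Import all_boot all_order all_algebra.
From mathcomp Require Import reals zify lra.
Import Order.TTheory GRing.Theory Num.Theory.
Set Implicit Arguments. Unset Strict Implicit. Unset Printing Implicit Defensive.

(* In each column j the zero sits in a uniformly random row, independently of
   the other columns.  With the other columns fixed, a deterministic tree follows
   the same path for all n positions of that zero until it probes it; if it finds
   the zero for F of the n positions, it spends at least 1 + 2 + ... + F + (n - F) F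
   >= F (n + 1) / 2 queries in column j summed over the positions.  Summing over
   columns and averaging over l, the expected number of zeros found is at most
   2 / (n + 1) times the expected number of queries.  A tree that stops only after
   c1 m zeros or c2 n m distinct queries therefore makes at least
   min (c1 / 2, c2) n m / 2 queries on average over mu, hence so does any mixture
   of such trees, and some input of the support attains the average. *)

Definition ffun_set (aT : finType) (rT : Type) (f : {ffun aT -> rT}) (a : aT) (y : rT) :
    {ffun aT -> rT} :=
  [ffun x => if x == a then y else f x].

Lemma sum_ffun_set (aT rT : finType) (a : aT) (Phi : {ffun aT -> rT} -> nat) :
  \sum_(f : {ffun aT -> rT}) \sum_(y : rT) Phi (ffun_set f a y) =
  (#|rT| * \sum_(f : {ffun aT -> rT}) Phi f)%N.
Proof.
have set_set (f : {ffun aT -> rT}) y z : ffun_set (ffun_set f a y) a z = ffun_set f a z.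
  by apply/ffunP => x; rewrite !ffunE; case: eqP.
have set_at (f : {ffun aT -> rT}) y : ffun_set f a y a = y by rewrite ffunE eqxx.
have set_id (f : {ffun aT -> rT}) y : (ffun_set f a y == f) = (f a == y).
  apply/eqP/eqP => [<-|fa]; first exact: set_at.
  by apply/ffunP => x; rewrite !ffunE; case: eqP => // ->.
have reindex y z : \sum_(f : {ffun aT -> rT} | f a == y) Phi (ffun_set f a z) =
                   \sum_(f : {ffun aT -> rT} | f a == z) Phi f.
  rewrite (reindex_onto (fun f => ffun_set f a y) (fun f => ffun_set f a z)).
    apply: eq_big => f; first by rewrite set_at eqxx set_set set_id.
    by move=> /andP[_ /eqP ->].
  by move=> f /eqP fa; rewrite set_set; apply/eqP; rewrite set_id fa.
rewrite (partition_big (fun f : {ffun aT -> rT} => f a) predT) //= -sum_nat_const.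
apply: eq_bigr => y _; rewrite exchange_big /=.
under eq_bigr => z _ do rewrite reindex.
by rewrite [RHS](partition_big (fun f : {ffun aT -> rT} => f a) predT).
Qed.

Lemma size_sum_count (T : Type) (J : finType) (f : T -> J) (s : seq T) :
  size s = \sum_(j : J) count (fun x => f x == j) s.
Proof.
elim: s => [|x s IH]; first by rewrite big1.
rewrite /= big_split /= -IH (bigD1 (f x)) //= eqxx big1 // => j /negbTE.
by rewrite eq_sym => ->.
Qed.

Lemma nzeros_found_input_of n m Pt (l : 'I_m -> 'I_n) (t : dtree (cell n m) (Sym Pt)) :
  nzeros_found t (input_of Pt l) = \sum_(j < m) ((l j, j) \in trace t (input_of Pt l)).
Proof.
set s := trace t _; rewrite /nzeros_found -sum1_count big_mkcond big_uniq ?undup_uniq //=.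
rewrite (eq_bigr (fun c : cell n m => (c.1 == l c.2 : nat))); last first.
  by move=> c _; rewrite /sym_value /input_of /= negbK; case: ifP.
rewrite (eq_bigl (mem s)) => [|c]; last by rewrite mem_undup.
rewrite big_mkcond.
transitivity (\sum_(i < n) \sum_(j < m) if (i, j) \in s then (i == l j : nat) else 0).
  by rewrite pair_bigA; apply: eq_bigr => -[i j].
rewrite exchange_big; apply: eq_bigr => j _.
rewrite (bigD1 (l j)) //= eqxx big1 ?addn0 => [|i /negbTE ->]; first by case: ifP.
by case: ifP.
Qed.

Section NeedleSearch.

Variables (n m : nat) (Pt : Type) (j : 'I_m) (a : cell n m -> Sym Pt).
Variable X : 'I_n -> cell n m -> Sym Pt.
Hypothesis X_off_column : forall v c, c.2 != j -> X v c = a c.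
Hypothesis X_column : forall v i, X v (i, j) = (i != v, None, None, None).

Definition needles_found (S : {set 'I_n}) (t : dtree (cell n m) (Sym Pt)) : nat :=
  \sum_(v in S) ((v, j) \in trace t (X v)).

Definition column_queries (S : {set 'I_n}) (t : dtree (cell n m) (Sym Pt)) : nat :=
  \sum_(v in S) count (fun c : cell n m => c.2 == j) (trace t (X v)).

Lemma needles_found_le_card (S : {set 'I_n}) t : needles_found S t <= #|S|.
Proof. by rewrite -sum1_card; apply: leq_sum => v _; case: (_ \in _). Qed.

Lemma needles_found_Node_off S i j' k : j' != j ->
  needles_found S (Node (i, j') k) = needles_found S (k (a (i, j'))).
Proof.
move=> j'j; apply: eq_bigr => v _ /=.
by rewrite X_off_column // in_cons xpair_eqE [j == j']eq_sym (negbTE j'j) andbF.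
Qed.

Lemma column_queries_Node_off S i j' k : j' != j ->
  column_queries S (Node (i, j') k) = column_queries S (k (a (i, j'))).
Proof. by move=> j'j; apply: eq_bigr => v _ /=; rewrite X_off_column // (negbTE j'j). Qed.

Lemma trace_Node_column_miss v i k : v != i ->
  trace (Node (i, j) k) (X v) = (i, j) :: trace (k (true, None, None, None)) (X v).
Proof. by move=> vi /=; rewrite X_column eq_sym vi. Qed.

Lemma needles_found_Node_column S i k :
  needles_found S (Node (i, j) k) =
  (i \in S) + needles_found (S :\ i) (k (true, None, None, None)).
Proof.
have miss v : v \in S :\ i ->
    ((v, j) \in trace (Node (i, j) k) (X v)) =
    ((v, j) \in trace (k (true, None, None, None)) (X v)) :> nat.
  case/setD1P => vi _; rewrite trace_Node_column_miss // in_cons xpair_eqE.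
  by rewrite (negbTE vi).
case: (boolP (i \in S)) => iS.
  by rewrite /needles_found (big_setD1 i iS) (eq_bigr _ miss) /= in_cons eqxx.
rewrite /needles_found -(eq_bigr _ miss); apply: eq_bigl => v.
by rewrite in_setD1 andb_idl // => vS; apply: contraNneq iS => <-.
Qed.

Lemma column_queries_Node_column (S : {set 'I_n}) i k :
  (i \in S) + #|S :\ i| + column_queries (S :\ i) (k (true, None, None, None)) <=
  column_queries S (Node (i, j) k).
Proof.
rewrite -addnA.
have -> : #|S :\ i| + column_queries (S :\ i) (k (true, None, None, None)) =
          column_queries (S :\ i) (Node (i, j) k).
  rewrite /column_queries -sum1_card -big_split; apply: eq_bigr => v /setD1P[vi _].
  by rewrite trace_Node_column_miss //= eqxx.
case: (boolP (i \in S)) => iS.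
  by rewrite /column_queries (big_setD1 i iS) /= eqxx; lia.
rewrite /column_queries (eq_bigl (mem S)) // => v.
by rewrite in_setD1 andb_idl // => vS; apply: contraNneq iS => <-.
Qed.

(* A query outside column j gets the same answer on every X v, and a query of
   (i, j) answers 1 to every v other than i, so the induction drops i from S. *)
Lemma needle_search_bound (S : {set 'I_n}) t :
  #|S|.+1 * needles_found S t <= 2 * column_queries S t.
Proof.
elim: t S => [b|[i j'] k IH] S; first by rewrite /needles_found big1 ?muln0.
have [->|j'j] := eqVneq j' j; last first.
  by rewrite needles_found_Node_off // column_queries_Node_off // IH.
have IHk := IH (true, None, None, None) (S :\ i).
have found_le := needles_found_le_card (S :\ i) (k (true, None, None, None)).
have queries_ge := column_queries_Node_column S i k.
rewrite needles_found_Node_column (cardsD1 i S).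
move: IHk found_le queries_ge.
move: (needles_found _ _) (column_queries (S :\ i) _) (column_queries S _) #|S :\ i|.
by case: (i \in S) => /= *; nia.
Qed.

End NeedleSearch.

Lemma column_search_bound n m Pt (j : 'I_m) (t : dtree (cell n m) (Sym Pt)) : 0 < n ->
  n.+1 * \sum_(l : {ffun 'I_m -> 'I_n}) ((l j, j) \in trace t (input_of Pt l)) <=
  2 * \sum_(l : {ffun 'I_m -> 'I_n})
        count (fun c : cell n m => c.2 == j) (trace t (input_of Pt l)).
Proof.
move=> n_gt0.
have average (Phi : {ffun 'I_m -> 'I_n} -> nat) :
    n * \sum_l Phi l = \sum_l \sum_(v < n) Phi (ffun_set l j v).
  by rewrite sum_ffun_set card_ord.
rewrite -(leq_pmul2l n_gt0) !(mulnCA n) !average !big_distrr /=; apply: leq_sum => l _.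
under eq_bigr do rewrite ffunE eqxx.
have off_column v (c : cell n m) :
    c.2 != j -> input_of Pt (ffun_set l j v) c = input_of Pt l c.
  by move=> cj; rewrite /input_of ffunE (negbTE cj).
have on_column v i : input_of Pt (ffun_set l j v) (i, j) = (i != v, None, None, None).
  by rewrite /input_of ffunE eqxx.
have := needle_search_bound off_column on_column [set: 'I_n] t.
by rewrite cardsT card_ord /needles_found /column_queries !(eq_bigl _ _ (@in_setT _)).
Qed.

Lemma sum_nzeros_found_le n m Pt (t : dtree (cell n m) (Sym Pt)) : 0 < n ->
  n.+1 * \sum_(l : {ffun 'I_m -> 'I_n}) nzeros_found t (input_of Pt l) <=
  2 * \sum_(l : {ffun 'I_m -> 'I_n}) nqueries t (input_of Pt l).
Proof.
move=> n_gt0.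
under eq_bigr do rewrite nzeros_found_input_of.
under [in X in _ <= X]eq_bigr do rewrite /nqueries (size_sum_count snd).
rewrite exchange_big [in X in _ <= X]exchange_big !big_distrr /=.
by apply: leq_sum => j _; apply: column_search_bound.
Qed.

Local Open Scope ring_scope.

Lemma stopping_condition_bound (R : realFieldType) (c1 c2 : R) n m Pt
    (t : dtree (cell n m) (Sym Pt)) (x : cell n m -> Sym Pt) :
  c1 * m%:R <= (nzeros_found t x)%:R \/ c2 * (n * m)%:R <= (ndistinct t x)%:R ->
  Order.min (c1 / 2) c2 * (n * m)%:R <=
  n.+1%:R / 2 * (nzeros_found t x)%:R + (nqueries t x)%:R.
Proof.
set d := Order.min _ _; set Z := (nzeros_found t x)%:R; set Q := (nqueries t x)%:R.
have distinct_le : (ndistinct t x)%:R <= Q by rewrite ler_nat size_undup.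
have nm_ge0 : 0 <= n%:R * m%:R :> R by rewrite mulr_ge0.
have Z_ge0 : 0 <= Z by [].
have Q_ge0 : 0 <= Q by [].
rewrite natrM -natr1 => -[stop|stop].
- have d_le : d * (n%:R * m%:R) <= c1 / 2 * (n%:R * m%:R).
    by rewrite ler_wpM2r // ge_min lexx.
  have Zn_ge : c1 * m%:R * n%:R <= Z * n%:R by rewrite ler_wpM2r.
  lra.
- have d_le : d * (n%:R * m%:R) <= c2 * (n%:R * m%:R).
    by rewrite ler_wpM2r // ge_min lexx orbT.
  have : 0 <= (n%:R + 1) / 2 * Z by rewrite mulr_ge0 // divr_ge0 // addr_ge0.
  lra.
Qed.

Lemma sum_nqueries_ge (R : realFieldType) (c1 c2 : R) n m Pt
    (t : dtree (cell n m) (Sym Pt)) : (0 < n)%N ->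
  (forall l : {ffun 'I_m -> 'I_n},
     c1 * m%:R <= (nzeros_found t (input_of Pt l))%:R \/
     c2 * (n * m)%:R <= (ndistinct t (input_of Pt l))%:R) ->
  #|{ffun 'I_m -> 'I_n}|%:R * (Order.min (c1 / 2) c2 / 2 * (n * m)%:R) <=
  (\sum_(l : {ffun 'I_m -> 'I_n}) nqueries t (input_of Pt l))%:R.
Proof.
move=> n_gt0 stop.
have : \sum_(l : {ffun 'I_m -> 'I_n}) Order.min (c1 / 2) c2 * (n * m)%:R <=
    \sum_(l : {ffun 'I_m -> 'I_n}) (n.+1%:R / 2 * (nzeros_found t (input_of Pt l))%:R
                                    + (nqueries t (input_of Pt l))%:R).
  by apply: ler_sum => l _; apply: stopping_condition_bound.
rewrite sumr_const big_split -mulr_sumr -!natr_sum /= -mulr_natl.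
have := sum_nzeros_found_le t n_gt0; rewrite -(ler_nat R) !natrM.
lra.
Qed.

Lemma exists_ge_average (R : realDomainType) (I : finType) (F : I -> R) (c : R) :
  (0 < #|I|)%N -> #|I|%:R * c <= \sum_i F i -> exists i, c <= F i.
Proof.
case/card_gt0P => i0 _ le_sum.
have [/existsP[i le_ci]|/existsPn lt_F] := boolP [exists i, c <= F i]; first by exists i.
suff : \sum_i F i < #|I|%:R * c by rewrite ltNge le_sum.
rewrite mulr_natl -sumr_const; apply: ltr_sum => [|i _]; last by rewrite ltNge lt_F.
by apply/hasP; exists i0; rewrite ?mem_index_enum.
Qed.

Theorem lemma10 (R : realType) (c1 c2 : R) (hc1 : 0 < c1) (hc2 : 0 < c2) :
  exists C : R, 0 < C /\
  forall (n m : nat), (0 < n)%N -> (0 < m)%N ->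
  forall (Pt : Type) (k : nat) (w : 'I_k -> R)
         (T : 'I_k -> dtree (cell n m) (Sym Pt)),
  is_distribution w ->
  (forall i, 0 < w i ->
     forall x : cell n m -> Sym Pt, in_supp_mu x ->
       c1 * m%:R <= (nzeros_found (T i) x)%:R \/
       c2 * (n * m)%:R <= (ndistinct (T i) x)%:R) ->
  exists x : cell n m -> Sym Pt, in_supp_mu x /\
    C * (n * m)%:R <= expected_queries w T x.
Proof.
exists (Order.min (c1 / 2) c2 / 2); split.
  by rewrite divr_gt0 // lt_min hc2 andbT divr_gt0.
move=> n m n_gt0 _ Pt k w T [w_ge0 w_sum1] stop.
set B := Order.min (c1 / 2) c2 / 2 * (n * m)%:R.
suff [l le_B] : exists l : {ffun 'I_m -> 'I_n}, B <= expected_queries w T (input_of Pt l).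
  by exists (input_of Pt l); split => //; exists l.
apply: exists_ge_average; first by apply/card_gt0P; exists [ffun=> Ordinal n_gt0].
rewrite /expected_queries exchange_big /= -[X in X <= _]mul1r -{1}w_sum1 mulr_suml.
apply: ler_sum => i _; rewrite -mulr_sumr -natr_sum.
have := w_ge0 i; rewrite le_eqVlt => /predU1P[<-|w_gt0]; first by rewrite !mul0r.
rewrite ler_pM2l //; apply: sum_nqueries_ge => // l.
by apply: stop => //; exists l.
Qed.
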